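(* Let $A\in\mathbb{R}^{m\times n}$, $y\in\mathbb{R}^m$, $\lambda>0$, and let $x^\star$ be a global minimizer of $$\min_{x\in\mathbb{R}^n}\ \frac{1}{2\lambda}\|Ax-y\|^2+\|Lx\|_{1,2}.$$ Let $\beta^\star=-\frac{1}{\lambda}A^\top(Ax^\star-y)$, let $\widehat{L}=L-P_{T_z}LP_{T_x^\perp}$ be the effective lifting operator associated with $x^\star$, let $\widehat{u}_{\min}=\widehat{L}(\widehat{L}^\top\widehat{L})^{-1}\beta^\star$, and define the OGN certificate $u^\dagger\in\mathbb{R}^p$ blockwise by $u^\dagger_{J_t}=(\widehat{u}_{\min})_{J_t}$ if $x^\star_{G_t}=0$, and $u^\dagger_{J_t}=x^\star_{G_t}/\|x^\star_{G_t}\|$ if $x^\star_{G_t}\neq 0$. Then $L^\top u^\dagger=\beta^\star$. Moreover, for every $t\in\{1,\dots,N\}$, if $\|u^\dagger_{J_t}\|<1$ then $x^\star_{G_t}=0$.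
   Context: Let $n,N\in\mathbb{N}$ and let $G_1,\dots,G_N\subseteq\{1,\dots,n\}$ be nonempty groups, possibly overlapping, with $\bigcup_i G_i=\{1,\dots,n\}$, and weights $w_1,\dots,w_N>0$. For $x\in\mathbb{R}^n$ and $G\subseteq\{1,\dots,n\}$, $x_G\in\mathbb{R}^{|G|}$ is the subvector of entries indexed by $G$ (increasing order). Let $p=\sum_i|G_i|$ and partition $\{1,\dots,p\}$ into consecutive blocks $J_i=\{\sum_{j<i}|G_j|+1,\dots,\sum_{j\le i}|G_j|\}$, $i=1,\dots,N$. The lifting operator $L\in\mathbb{R}^{p\times n}$ is defined by $(Lx)_{J_i}=w_ix_{G_i}$. For $z\in\mathbb{R}^p$, $\|z\|_{1,2}=\sum_{i=1}^N\|z_{J_i}\|$ (Euclidean norms), so $\|Lx\|_{1,2}=\sum_i w_i\|x_{G_i}\|$. For a point $x\in\mathbb{R}^n$: $\mathcal{I}_x=\{t:\ x_{G_t}\neq 0\}$; $\mathcal{E}_x=\{1,\dots,n\}\setminus\bigcup_{t\notin\mathcal{I}_x}G_t$ and $T_x=\{x'\in\mathbb{R}^n:\mathrm{supp}(x')\subseteq\mathcal{E}_x\}$; $\mathcal{E}_z=\bigcup_{t\in\mathcal{I}_x}J_t$ and $T_z=\{z'\in\mathbb{R}^p:\mathrm{supp}(z')\subseteq\mathcal{E}_z\}$. $P_T$ denotes the orthogonal projection onto a coordinate subspace $T$ (which zeroes the coordinates outside the corresponding index set) and $T^\perp$ its orthogonal complement. The effective lifting operator associated with $x$ is $\widehat{L}=L-P_{T_z}LP_{T_x^\perp}$;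 here $\widehat{L}^\top\widehat{L}$ is invertible. *)

From HB Require Import structures.
From mathcomp Require Import all_boot all_order all_algebra.
From mathcomp Require Import reals.
Set Implicit Arguments. Unset Strict Implicit. Unset Printing Implicit Defensive.
Import Order.TTheory GRing.Theory Num.Theory.
Local Open Scope ring_scope.

Section GroupLasso.
Variables (R : realType) (n N : nat) (G : 'I_N -> {set 'I_n}) (w : 'I_N -> R).

Definition sqnorm m (v : 'cV[R]_m) : R := \sum_(i < m) v i 0 ^+ 2.
Definition enorm m (v : 'cV[R]_m) : R := Num.sqrt (sqnorm v).

Definition gnorm (x : 'cV[R]_n) (t : 'I_N) : R :=
  Num.sqrt (\sum_(j in G t) x j 0 ^+ 2).

Definition p : nat := \sum_(t < N) #|G t|.
Definition offset (t : 'I_N) : nat := \sum_(s < N | (s < t)%N) #|G s|.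
Definition J (t : 'I_N) : {set 'I_p} :=
  [set k : 'I_p | (offset t <= k < offset t + #|G t|)%N].

(* gsel t k j : row k lies in block J_t and j is the (k - offset t)-th element
   (0-based, increasing order) of G_t *)
Definition gsel (t : 'I_N) (k : 'I_p) (j : 'I_n) : bool :=
  (k \in J t) && (val j == nth 0%N [seq val i | i <- enum (G t)] (k - offset t)).

(* lifting operator: (Lx)_{J_t} = w_t x_{G_t} *)
Definition Lop : 'M[R]_(p, n) :=
  \matrix_(k, j) \sum_(t < N) (if gsel t k j then w t else 0).

Definition blknorm (z : 'cV[R]_p) (t : 'I_N) : R :=
  Num.sqrt (\sum_(k in J t) z k 0 ^+ 2).
Definition norm12 (z : 'cV[R]_p) : R := \sum_(t < N) blknorm z t.

Definition active (x : 'cV[R]_n) (t : 'I_N) : bool :=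
  [exists j in G t, x j 0 != 0].
Definition Iset (x : 'cV[R]_n) : {set 'I_N} := [set t | active x t].

Definition Ex (x : 'cV[R]_n) : {set 'I_n} :=
  ~: (\bigcup_(t | t \notin Iset x) G t).
Definition Ez (x : 'cV[R]_n) : {set 'I_p} :=
  \bigcup_(t | t \in Iset x) J t.

Definition coordproj m (E : {set 'I_m}) : 'M[R]_m :=
  diag_mx (\row_i (if i \in E then 1 else 0)).
Definition PTx (x : 'cV[R]_n) : 'M[R]_n := coordproj (Ex x).
Definition PTxperp (x : 'cV[R]_n) : 'M[R]_n := coordproj (~: Ex x).
Definition PTz (x : 'cV[R]_n) : 'M[R]_p := coordproj (Ez x).

Definition Lhat (x : 'cV[R]_n) : 'M[R]_(p, n) :=
  Lop - PTz x *m Lop *m PTxperp x.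

Definition umin (x : 'cV[R]_n) (beta : 'cV[R]_n) : 'cV[R]_p :=
  Lhat x *m invmx ((Lhat x)^T *m Lhat x) *m beta.

Definition udagger (x : 'cV[R]_n) (beta : 'cV[R]_n) : 'cV[R]_p :=
  \col_k \sum_(t < N | k \in J t)
     (if active x t then (\sum_(j < n | gsel t k j) x j 0) / gnorm x t
      else umin x beta k 0).

End GroupLasso.

(* [Lop] and the effective operator [Lhat] both have exactly one nonzero entry
   per row: row [blkpos t j] of block [J_t] carries a weight in column [j].  Their
   Gram matrices are therefore diagonal, and every coordinate [j] lies in a group
   of [Lhat]-weight [w t] (any group if [j \in E_x], an inactive one otherwise),
   so [Lhat^T Lhat] is invertible and [Lhat^T umin = beta].  Outside [E_x], x*_j
   vanishes, so the active blocks of the certificate contribute nothing and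
   [(L^T u)_j = (Lhat^T umin)_j].  On [E_x] every group through [j] is active,
   the penalty is differentiable along [e_j] and [(L^T u)_j] is its partial
   derivative, which equals [beta_j] by first-order optimality: the objective
   increases along [h e_j] by at most [h D + h^2 K], so [D = 0].  Finally an
   active block of the certificate is a unit vector. *)

From Pilot Require Import Defs.
From HB Require Import structures.
From mathcomp Require Import all_boot all_order all_algebra.
From mathcomp Require Import reals.
From mathcomp Require Import ring lra.
Set Implicit Arguments. Unset Strict Implicit. Unset Printing Implicit Defensive.
Import Order.TTheory GRing.Theory Num.Theory.
Local Open Scope ring_scope.

Local Notation gnorm := Defs.gnorm.

Section BlockPosition.
Variables (n N : nat) (G : 'I_N -> {set 'I_n}).
Hypothesis HGne : forall t, G t != set0.

Lemma offset_card_le_sum (t : 'I_N) (Q : pred 'I_N) : Q t ->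
  (forall s : 'I_N, (s < t)%N -> Q s) ->
  (offset G t + #|G t| <= \sum_(s < N | Q s) #|G s|)%N.
Proof.
move=> Qt Qlt; rewrite (bigID (fun s : 'I_N => (s < t)%N)) /=; apply: leq_add.
  rewrite /offset; apply: eq_leq; apply: eq_bigl => s.
  by case: (ltnP s t) => st; rewrite ?andbT ?andbF ?Qlt.
by rewrite (bigD1 t) /= ?Qt ?ltnn //= leq_addr.
Qed.

Lemma offset_card_le_p t : (offset G t + #|G t| <= p G)%N.
Proof. exact: (@offset_card_le_sum t predT). Qed.

Lemma cardG_gt0 t : (0 < #|G t|)%N.
Proof. by rewrite card_gt0 HGne. Qed.

Lemma blkpos_subproof t (j : 'I_n) :
  (offset G t + index j (enum (G t)) %% #|G t| < p G)%N.
Proof.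
by apply: leq_trans (offset_card_le_p t); rewrite ltn_add2l ltn_mod cardG_gt0.
Qed.

(* The row of [J G t] holding coordinate [j] of [x_{G_t}]; the [%%] only makes
   it total in [j] and is the identity on [G t] (see [blkposE]). *)
Definition blkpos t j : 'I_(p G) := Ordinal (blkpos_subproof t j).

Lemma index_enum_lt t j : j \in G t -> (index j (enum (G t)) < #|G t|)%N.
Proof. by move=> jG; rewrite cardE index_mem mem_enum. Qed.

Lemma blkposE t j : j \in G t ->
  val (blkpos t j) = (offset G t + index j (enum (G t)))%N.
Proof. by move=> jG /=; rewrite modn_small ?index_enum_lt. Qed.

Lemma blkpos_J t j : j \in G t -> blkpos t j \in J G t.
Proof. by move=> jG; rewrite inE blkposE // leq_addr ltn_add2l index_enum_lt. Qed.

Lemma J_disjoint t t' (k : 'I_(p G)) : k \in J G t -> k \in J G t' -> t = t'.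
Proof.
have lt_disj (a b : 'I_N) : (a < b)%N -> k \in J G a -> k \in J G b -> False.
  move=> ab; rewrite !inE => /andP[_ ka] /andP[bk _].
  have := @offset_card_le_sum a (fun s : 'I_N => (s < b)%N) ab
    (fun s sa => ltn_trans sa ab).
  by move/(leq_trans)/(_ bk); rewrite leqNgt ka.
move=> kt kt'; case: (ltngtP t t') => [tt'|t't|/val_inj //].
- by case: (lt_disj _ _ tt' kt kt').
- by case: (lt_disj _ _ t't kt' kt).
Qed.

Lemma blkpos_eq t t' j j' : j \in G t -> j' \in G t' ->
  blkpos t j = blkpos t' j' -> t = t' /\ j = j'.
Proof.
move=> jG jG' e.
have tt' : t = t' by apply: (J_disjoint (blkpos_J jG)); rewrite e blkpos_J.
subst t'; split=> //.
have := congr1 val e; rewrite !blkposE // => /eqP; rewrite eqn_add2l => /eqP eij.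
by rewrite -(nth_index j (s := enum (G t)) (x := j)) ?mem_enum // eij nth_index ?mem_enum.
Qed.

Lemma blkpos_inj t : {in G t &, injective (blkpos t)}.
Proof. by move=> j j' jG jG' /(blkpos_eq jG jG') []. Qed.

Lemma J_blkposP t k : k \in J G t -> exists2 j, j \in G t & k = blkpos t j.
Proof.
rewrite inE => /andP[tk kt]; case/set0Pn: (HGne t) => j0 _.
set j := nth j0 (enum (G t)) (k - offset G t).
have jG : j \in G t by rewrite -mem_enum mem_nth // -cardE ltn_subLR.
exists j => //; apply: val_inj.
by rewrite blkposE // index_uniq ?enum_uniq -?cardE ?ltn_subLR // subnKC.
Qed.

Lemma imset_blkpos t : blkpos t @: G t = J G t.
Proof.
apply/setP => k; apply/imsetP/idP => [[j jG ->]|/J_blkposP[j jG ->]].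
  exact: blkpos_J.
by exists j.
Qed.

Lemma big_J (V : nmodType) t (F : 'I_(p G) -> V) :
  \sum_(k in J G t) F k = \sum_(j in G t) F (blkpos t j).
Proof. by rewrite -imset_blkpos big_imset //; exact: blkpos_inj. Qed.

Lemma gselE t k j : @gsel _ _ G t k j = (j \in G t) && (k == blkpos t j).
Proof.
have nth_idx j' : j' \in G t ->
    nth 0%N [seq val i | i <- enum (G t)] (index j' (enum (G t))) = j'.
  move=> j'G; rewrite (nth_map j') -?cardE ?index_enum_lt //.
  by rewrite nth_index ?mem_enum.
apply/andP/andP => [[kJ /eqP ej]|[jG /eqP ->]]; last first.
  by rewrite blkpos_J // blkposE // addKn nth_idx.
have [j' j'G ek] := J_blkposP kJ.
have ejj' : j = j' by apply: val_inj; rewrite ej ek blkposE // addKn nth_idx.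
by rewrite ejj' j'G ek.
Qed.

End BlockPosition.

Section LiftMatrix.
Variables (R : realFieldType) (n N : nat) (G : 'I_N -> {set 'I_n}).
Hypothesis HGne : forall t, G t != set0.
Local Notation blkpos := (blkpos HGne).

Definition lift_mx (c : 'I_N -> 'I_n -> R) : 'M[R]_(p G, n) :=
  \matrix_(k, j) \sum_(t < N) (if @gsel _ _ G t k j then c t j else 0).

Lemma lift_mx_blkpos c t j j' : j \in G t ->
  lift_mx c (blkpos t j) j' = if j' == j then c t j else 0.
Proof.
move=> jG; rewrite mxE.
under eq_bigr => s _ do rewrite gselE.
have [->|j'j] := eqVneq j' j.
  rewrite (bigD1 t) //= jG eqxx big1 ?addr0 // => s st.
  by case: ifP => // /andP[jGs /eqP /(blkpos_eq jG jGs)[ts _]]; rewrite ts eqxx in st.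
apply: big1 => s _; case: ifP => // /andP[j'Gs /eqP /(blkpos_eq jG j'Gs)[_ jj']].
by rewrite jj' eqxx in j'j.
Qed.

Lemma tr_lift_mulmx c m (V : 'M[R]_(p G, m)) j i :
  ((lift_mx c)^T *m V) j i = \sum_(t < N | j \in G t) c t j * V (blkpos t j) i.
Proof.
rewrite mxE; under eq_bigr => k _ do rewrite !mxE big_distrl /=.
rewrite exchange_big [RHS]big_mkcond; apply: eq_bigr => t _.
under eq_bigr => k _ do rewrite gselE.
case: ifP => jG /=; last by apply: big1 => k _; rewrite mul0r.
rewrite (bigD1 (blkpos t j)) //= eqxx big1 ?addr0 // => k kj.
by rewrite (negbTE kj) mul0r.
Qed.

Lemma lift_mulmx_blkpos c (x : 'cV[R]_n) t j : j \in G t ->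
  (lift_mx c *m x) (blkpos t j) 0 = c t j * x j 0.
Proof.
move=> jG; rewrite mxE (bigD1 j) //= lift_mx_blkpos // eqxx big1 ?addr0 // => j' j'j.
by rewrite lift_mx_blkpos // (negbTE j'j) mul0r.
Qed.

Lemma lift_gram c : (lift_mx c)^T *m lift_mx c =
  diag_mx (\row_j \sum_(t < N | j \in G t) c t j ^+ 2).
Proof.
apply/matrixP => j j'; rewrite tr_lift_mulmx [RHS]mxE [in RHS]mxE.
under eq_bigr => t jG do rewrite lift_mx_blkpos //.
have [_|_] := eqVneq j j'; last by rewrite mulr0n big1 // => t _; rewrite mulr0.
by rewrite mulr1n; apply: eq_bigr => t _; rewrite expr2.
Qed.

Lemma lift_gram_unit c : (forall j, exists2 t, j \in G t & c t j != 0) ->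
  (lift_mx c)^T *m lift_mx c \in unitmx.
Proof.
move=> c_nz; rewrite lift_gram unitmxE det_diag unitfE.
apply/prodf_neq0 => j _; rewrite mxE; have [t jG ct] := c_nz j.
rewrite (bigD1 t) //= gt_eqF // ltr_pwDl ?exprn_even_gt0 ?ct ?orbT //.
by apply: sumr_ge0 => s _; exact: sqr_ge0.
Qed.

End LiftMatrix.

Lemma Lop_lift (R : realType) n N (G : 'I_N -> {set 'I_n}) (w : 'I_N -> R) :
  Lop G w = lift_mx G (fun t _ => w t).
Proof. by []. Qed.

Section GroupSupport.
Variables (R : realType) (n N : nat) (G : 'I_N -> {set 'I_n}) (x : 'cV[R]_n).

Lemma inactive_eq0 t j : ~~ active G x t -> j \in G t -> x j 0 = 0.
Proof.
move=> xt0 jG; apply/eqP; apply: contraNT xt0 => xj.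
by apply/existsP; exists j; rewrite jG xj.
Qed.

Lemma Ex_active t j : j \in Ex G x -> j \in G t -> active G x t.
Proof.
rewrite inE => jEx jG; apply: contraNT jEx => xt0.
by apply/bigcupP; exists t; rewrite ?inE.
Qed.

Lemma notin_ExP j : j \notin Ex G x -> exists2 t, j \in G t & ~~ active G x t.
Proof. by rewrite inE negbK => /bigcupP[t]; rewrite inE; exists t. Qed.

Lemma sqr_gnorm t : gnorm G x t ^+ 2 = \sum_(j in G t) x j 0 ^+ 2.
Proof. by rewrite sqr_sqrtr // sumr_ge0 // => j _; exact: sqr_ge0. Qed.

Lemma gnorm_gt0 t : active G x t -> 0 < gnorm G x t.
Proof.
case/existsP => j /andP[jG xj]; rewrite sqrtr_gt0 (bigD1 j) //=.
rewrite ltr_pwDl ?exprn_even_gt0 ?xj ?orbT //.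
by apply: sumr_ge0 => i _; exact: sqr_ge0.
Qed.

End GroupSupport.

Section EffectiveLift.
Variables (R : realType) (n N : nat) (G : 'I_N -> {set 'I_n}) (w : 'I_N -> R).
Hypothesis HGne : forall t, G t != set0.
Hypothesis HGcov : \bigcup_(t < N) G t = [set: 'I_n].
Hypothesis Hw : forall t, 0 < w t.
Local Notation blkpos := (blkpos HGne).

Definition lhat_weight (x : 'cV[R]_n) t j : R :=
  if (j \in Ex G x) || ~~ active G x t then w t else 0.

Lemma Ez_blkpos (x : 'cV[R]_n) t j : j \in G t -> (blkpos t j \in Ez G x) = active G x t.
Proof.
move=> jG; rewrite /Ez; apply/bigcupP/idP => [[t']|xt]; last first.
  by exists t; [rewrite inE | exact: blkpos_J].
by rewrite inE => xt' /(J_disjoint (blkpos_J HGne jG)) ->.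
Qed.

Lemma Lhat_lift (x : 'cV[R]_n) : Lhat G w x = lift_mx G (lhat_weight x).
Proof.
apply/matrixP => k j.
rewrite /Lhat /PTz /PTxperp /coordproj mul_mx_diag mul_diag_mx !mxE.
rewrite big_distrr big_distrl /= -sumrB; apply: eq_bigr => t _.
rewrite gselE; case: ifP => [/andP[jG /eqP ->]|_]; last by rewrite mulr0 mul0r subr0.
rewrite Ez_blkpos // inE /lhat_weight.
by case: (active G x t); case: (j \in Ex G x);
  rewrite /= ?mulr1 ?mul1r ?mulr0 ?mul0r ?subrr ?subr0.
Qed.

Lemma Lhat_gram_unit (x : 'cV[R]_n) : (Lhat G w x)^T *m Lhat G w x \in unitmx.
Proof.
rewrite Lhat_lift lift_gram_unit // => j.
have [jEx|/notin_ExP[t jG xt0]] := boolP (j \in Ex G x).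
  have /bigcupP[t _ jG] : j \in \bigcup_(t < N) G t by rewrite HGcov inE.
  by exists t; rewrite // /lhat_weight jEx gt_eqF.
by exists t; rewrite // /lhat_weight xt0 orbT gt_eqF.
Qed.

Lemma udagger_blkpos (x b : 'cV[R]_n) t j : j \in G t ->
  udagger G w x b (blkpos t j) 0 =
  if active G x t then x j 0 / gnorm G x t else umin G w x b (blkpos t j) 0.
Proof.
move=> jG; rewrite mxE (big_pred1 t) => [|t']; last first.
  by apply/idP/eqP => [/(J_disjoint (blkpos_J HGne jG))|->]; last exact: blkpos_J.
rewrite (big_pred1 j) // => j'; rewrite gselE.
by apply/andP/eqP => [[j'G /eqP /(blkpos_eq jG j'G)[]]|->].
Qed.

Lemma tr_Lhat_umin (x b : 'cV[R]_n) : (Lhat G w x)^T *m umin G w x b = b.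
Proof. by rewrite /umin !mulmxA mulmxV ?mul1mx ?Lhat_gram_unit. Qed.

Lemma tr_Lop_udagger_notin_Ex (x b : 'cV[R]_n) j : j \notin Ex G x ->
  ((Lop G w)^T *m udagger G w x b) j 0 = b j 0.
Proof.
move=> jEx; have [t0 jG0 /inactive_eq0 /(_ jG0) xj0] := notin_ExP jEx.
have := congr1 (fun M : 'cV[R]_n => M j 0) (tr_Lhat_umin x b).
rewrite /= Lop_lift Lhat_lift !tr_lift_mulmx => <-; apply: eq_bigr => t jG.
rewrite udagger_blkpos // /lhat_weight (negbTE jEx) /=.
by case: (active G x t); rewrite /= ?xj0 ?mul0r ?mulr0.
Qed.

Lemma tr_Lop_udagger_Ex (x b : 'cV[R]_n) j : j \in Ex G x ->
  ((Lop G w)^T *m udagger G w x b) j 0 =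
  \sum_(t < N | j \in G t) w t * (x j 0 / gnorm G x t).
Proof.
move=> jEx; rewrite Lop_lift tr_lift_mulmx; apply: eq_bigr => t jG.
by rewrite udagger_blkpos // (Ex_active jEx jG).
Qed.

Lemma blknorm_udagger_active (x b : 'cV[R]_n) t : active G x t ->
  blknorm (udagger G w x b) t = 1.
Proof.
move=> xt; rewrite /blknorm big_J.
under eq_bigr => j jG do rewrite udagger_blkpos // xt expr_div_n.
by rewrite -mulr_suml -sqr_gnorm divff ?sqrtr1 // sqrf_eq0 gt_eqF ?gnorm_gt0.
Qed.

End EffectiveLift.

Lemma sub_le_sqr_div (R : realFieldType) (q r : R) : 0 < r ->
  q - r <= (q ^+ 2 - r ^+ 2) / (2 * r).
Proof.
move=> r_gt0; rewrite -subr_ge0.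
have -> : (q ^+ 2 - r ^+ 2) / (2 * r) - (q - r) = (q - r) ^+ 2 / (2 * r).
  by field; rewrite gt_eqF.
by rewrite divr_ge0 ?sqr_ge0 // mulr_ge0 // ltW.
Qed.

(* Minimise [h * D + h ^+ 2 * K] at [h = - D / (K + 1)]. *)
Lemma linear_coef_eq0 (R : realFieldType) (D K : R) : 0 <= K ->
  (forall h, 0 <= h * D + h ^+ 2 * K) -> D = 0.
Proof.
move=> K_ge0 quad_ge0; have K1_gt0 : 0 < K + 1 by lra.
have := quad_ge0 (- D / (K + 1)).
have -> : - D / (K + 1) * D + (- D / (K + 1)) ^+ 2 * K = - (D / (K + 1)) ^+ 2.
  by field; rewrite gt_eqF.
rewrite oppr_ge0 => sqr_le0; apply/eqP.
have /eqP : (D / (K + 1)) ^+ 2 = 0 by apply/eqP; rewrite eq_le sqr_le0 sqr_ge0.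
by rewrite sqrf_eq0 mulf_eq0 invr_eq0 (gt_eqF K1_gt0) orbF.
Qed.

Lemma sum_sqr_add_delta (R : comPzRingType) n (S : {set 'I_n}) (x : 'cV[R]_n) h j :
  \sum_(i in S) (x + h *: delta_mx j 0) i 0 ^+ 2 =
  \sum_(i in S) x i 0 ^+ 2 + (if j \in S then 2 * h * x j 0 + h ^+ 2 else 0).
Proof.
have entry i : (x + h *: delta_mx j 0) i 0 = x i 0 + h * (i == j)%:R.
  by rewrite !mxE eqxx andbT.
case: ifP => jS; last first.
  rewrite addr0; apply: eq_bigr => i iS; rewrite entry.
  by have [ij|] := eqVneq i j; [rewrite ij jS in iS | rewrite mulr0 addr0].
rewrite (bigD1 j) // [in RHS](bigD1 j) //= entry eqxx mulr1.
rewrite (eq_bigr (fun i => x i 0 ^+ 2)) => [|i /andP[_ ij]]; first by ring.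
by rewrite entry (negbTE ij) mulr0 addr0.
Qed.

Lemma sqnorm_add (R : realType) m (r a : 'cV[R]_m) h :
  sqnorm (r + h *: a) = sqnorm r + 2 * h * (\sum_i r i 0 * a i 0) + h ^+ 2 * sqnorm a.
Proof.
rewrite /sqnorm; under eq_bigr => i _ do rewrite !mxE.
by rewrite !mulr_sumr -!big_split /=; apply: eq_bigr => i _; ring.
Qed.

Lemma sqnorm_residual_add_delta (R : realType) m n (A : 'M[R]_(m, n))
    (x : 'cV[R]_n) (y : 'cV[R]_m) h (j : 'I_n) :
  sqnorm (A *m (x + h *: delta_mx j 0) - y) = sqnorm (A *m x - y)
    + 2 * h * (A^T *m (A *m x - y)) j 0 + h ^+ 2 * sqnorm (A *m delta_mx j 0).
Proof.
rewrite [A *m (x + _)]mulmxDr -scalemxAr addrAC sqnorm_add; congr (_ + 2 * h * _ + _).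
by rewrite mxE; apply: eq_bigr => i _; rewrite -colE !mxE mulrC.
Qed.

Section GroupNormPerturbation.
Variables (R : realType) (n N : nat) (G : 'I_N -> {set 'I_n}) (w : 'I_N -> R).
Hypothesis HGne : forall t, G t != set0.
Hypothesis Hw : forall t, 0 < w t.

Lemma gnorm_add_delta_le (x : 'cV[R]_n) h t j : active G x t -> j \in G t ->
  gnorm G (x + h *: delta_mx j 0) t <=
  gnorm G x t + (2 * h * x j 0 + h ^+ 2) / (2 * gnorm G x t).
Proof.
move=> xt jG; have := sub_le_sqr_div (gnorm G (x + h *: delta_mx j 0) t) (gnorm_gt0 xt).
rewrite !sqr_gnorm sum_sqr_add_delta jG addrAC subrr add0r; lra.
Qed.

Lemma gnorm_add_delta_notin (x : 'cV[R]_n) h t j : j \notin G t ->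
  gnorm G (x + h *: delta_mx j 0) t = gnorm G x t.
Proof. by move=> jG; rewrite /Defs.gnorm sum_sqr_add_delta (negbTE jG) addr0. Qed.

Lemma norm12_Lop (x : 'cV[R]_n) :
  norm12 (Lop G w *m x) = \sum_(t < N) w t * gnorm G x t.
Proof.
apply: eq_bigr => t _; rewrite /blknorm (big_J HGne).
under eq_bigr => j jG do rewrite Lop_lift lift_mulmx_blkpos // exprMn.
by rewrite -big_distrr /= sqrtrM ?sqr_ge0 // sqrtr_sqr ger0_norm ?ltW.
Qed.

Lemma penalty_add_delta_le (x : 'cV[R]_n) h j :
  (forall t, j \in G t -> active G x t) ->
  \sum_(t < N) w t * gnorm G (x + h *: delta_mx j 0) t <=
  \sum_(t < N) w t * gnorm G x t
    + h * \sum_(t < N | j \in G t) w t * (x j 0 / gnorm G x t)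
    + h ^+ 2 * \sum_(t < N | j \in G t) w t / (2 * gnorm G x t).
Proof.
move=> jact; rewrite !mulr_sumr 2![\sum_(t | j \in G t) _]big_mkcond -!big_split /=.
apply: ler_sum => t _; case: ifP => jG; last first.
  by rewrite gnorm_add_delta_notin ?jG // !addr0.
have g_gt0 := gnorm_gt0 (jact t jG).
have -> : w t * gnorm G x t + h * (w t * (x j 0 / gnorm G x t))
    + h ^+ 2 * (w t / (2 * gnorm G x t))
  = w t * (gnorm G x t + (2 * h * x j 0 + h ^+ 2) / (2 * gnorm G x t)).
  by field; rewrite gt_eqF.
by apply: ler_wpM2l; [exact: ltW | exact: gnorm_add_delta_le (jact t jG) jG].
Qed.

End GroupNormPerturbation.

Section FirstOrderOptimality.
Variables (R : realType) (n N m : nat) (G : 'I_N -> {set 'I_n}) (w : 'I_N -> R).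
Hypothesis HGne : forall t, G t != set0.
Hypothesis Hw : forall t, 0 < w t.
Variables (A : 'M[R]_(m, n)) (y : 'cV[R]_m) (lam : R) (xs : 'cV[R]_n).
Hypothesis Hlam : 0 < lam.
Hypothesis Hmin : forall x : 'cV[R]_n,
  (2 * lam)^-1 * sqnorm (A *m xs - y) + norm12 (Lop G w *m xs)
  <= (2 * lam)^-1 * sqnorm (A *m x - y) + norm12 (Lop G w *m x).

Lemma penalty_grad_Ex j : j \in Ex G xs ->
  \sum_(t < N | j \in G t) w t * (xs j 0 / gnorm G xs t) =
  (- (lam^-1 *: (A^T *m (A *m xs - y)))) j 0.
Proof.
move=> jEx.
set D := \sum_(t < N | j \in G t) _; pose g := (A^T *m (A *m xs - y)) j 0.
set K := \sum_(t < N | j \in G t) w t / (2 * gnorm G xs t).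
set Q := sqnorm (A *m delta_mx j 0).
have K_ge0 : 0 <= (2 * lam)^-1 * Q + K.
  have Q_ge0 : 0 <= Q by apply: sumr_ge0 => i _; exact: sqr_ge0.
  rewrite addr_ge0 ?mulr_ge0 ?invr_ge0 ?mulr_ge0 ?(ltW Hlam) //.
  apply: sumr_ge0 => t jG; rewrite divr_ge0 ?mulr_ge0 ?(ltW (Hw t)) //.
  exact: ltW (gnorm_gt0 (Ex_active jEx jG)).
suff /eqP : D + g / lam = 0 by rewrite addr_eq0 => /eqP ->; rewrite 2!mxE mulrC.
apply: (linear_coef_eq0 K_ge0) => h.
have := Hmin (xs + h *: delta_mx j 0).
rewrite !(norm12_Lop HGne Hw) sqnorm_residual_add_delta -/g -/Q.
have := penalty_add_delta_le Hw h (fun t => Ex_active jEx); rewrite -/D -/K.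
have -> : (2 * lam)^-1 * (sqnorm (A *m xs - y) + 2 * h * g + h ^+ 2 * Q) =
    (2 * lam)^-1 * sqnorm (A *m xs - y) + h * (g / lam) + h ^+ 2 * ((2 * lam)^-1 * Q).
  by field; rewrite gt_eqF.
rewrite !mulrDr; lra.
Qed.

End FirstOrderOptimality.

Theorem proposition3p6 (R : realType) (n N m : nat)
  (G : 'I_N -> {set 'I_n}) (w : 'I_N -> R)
  (HGne : forall t, G t != set0)
  (HGcov : \bigcup_(t < N) G t = [set: 'I_n])
  (Hw : forall t, 0 < w t)
  (A : 'M[R]_(m, n)) (y : 'cV[R]_m) (lam : R) (Hlam : 0 < lam)
  (xs : 'cV[R]_n)
  (Hmin : forall x : 'cV[R]_n,
      (2 * lam)^-1 * sqnorm (A *m xs - y) + norm12 (Lop G w *m xs)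
      <= (2 * lam)^-1 * sqnorm (A *m x - y) + norm12 (Lop G w *m x)) :
  let beta := - (lam^-1 *: (A^T *m (A *m xs - y))) in
  let ud := udagger G w xs beta in
  (Lop G w)^T *m ud = beta /\
  (forall t : 'I_N, blknorm ud t < 1 -> forall j, j \in G t -> xs j 0 = 0).
Proof.
move=> beta ud; split.
  apply/matrixP => j i; rewrite ord1.
  have [jEx|jEx] := boolP (j \in Ex G xs).
    by rewrite (tr_Lop_udagger_Ex w HGne) // (penalty_grad_Ex HGne Hw Hlam Hmin).
  exact: (tr_Lop_udagger_notin_Ex HGne HGcov Hw).
move=> t ud_lt1 j jG; have [xt|xt0] := boolP (active G xs t).
  by move: ud_lt1; rewrite (blknorm_udagger_active w HGne) // ltxx.
exact: inactive_eq0 xt0 jG.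
Qed.
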